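(* Let $k$ be even and let $n>k$ be an integer with $n\equiv k/2\pmod k$. Then $\mathrm{msum}(n,k)=1$, and if moreover $n$ is odd, then also $\mathrm{disc}(n,k)=1$.
   Context: Let $n,k$ be positive integers with $n>k$ and let $S_n$ be the set of permutations $\pi=(\pi_1,\dots,\pi_n)$ of $1,\dots,n$. Indices are taken cyclically: $\pi_{n+i}=\pi_i$. The $k$-consecutive sums of $\pi$ are $s_i=\sum_{j=0}^{k-1}\pi_{i+j}$ for $i=1,\dots,n$. Define $\mathrm{msum}(\pi,k)=\max\{s_i: 1\le i\le n\}-\frac{k(n+1)}{2}$, $\mathrm{msum}(n,k)=\min\{\mathrm{msum}(\pi,k):\pi\in S_n\}$, $\mathrm{disc}(\pi,k)=\max\{|s_i-\frac{k(n+1)}{2}|:1\le i\le n\}$ and $\mathrm{disc}(n,k)=\min\{\mathrm{disc}(\pi,k):\pi\in S_n\}$. *)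

From HB Require Import structures.
From mathcomp Require Import all_boot all_order all_algebra all_fingroup.
Set Implicit Arguments. Unset Strict Implicit. Unset Printing Implicit Defensive.
Import Order.TTheory GRing.Theory Num.Theory.
Local Open Scope ring_scope.

(* A permutation pi = (pi_1,...,pi_n) of 1..n is encoded by s : 'S_n via
   pi_{m+1} = (s m).+1 for m : 'I_n (0-based positions).
   Cyclic indexing: position m (any nat) means position m mod n. *)
Definition pival (n : nat) (s : 'S_n) (m : nat) : nat :=
  oapp (fun i : 'I_n => (s i).+1) 0%N (insub (m %% n)%N : option 'I_n).

Definition ksum (n k : nat) (s : 'S_n) (i : nat) : nat :=
  (\sum_(j < k) pival s (i + j))%N.

Definition kmean (n k : nat) : rat := (k * (n + 1))%:R / 2%:R.

Definition msum_perm (n k : nat) (s : 'S_n) : rat :=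
  \big[Num.max/(ksum k s 0)%:R]_(i < n) (ksum k s i)%:R - kmean n k.

Definition msum (n k : nat) : rat :=
  \big[Num.min/msum_perm k (1%g : 'S_n)]_(s : 'S_n) msum_perm k s.

Definition disc_perm (n k : nat) (s : 'S_n) : rat :=
  \big[Num.max/`|(ksum k s 0)%:R - kmean n k|]_(i < n) `|(ksum k s i)%:R - kmean n k|.

Definition disc (n k : nat) : rat :=
  \big[Num.min/disc_perm k (1%g : 'S_n)]_(s : 'S_n) disc_perm k s.

(* Write k = 2m, so that n = m(2q+1) and the mean k(n+1)/2 = m(n+1) is an integer.
   The k-sums of any permutation average exactly to this mean, and they cannot all be
   equal: constant k-sums force pi_(i+k) = pi_i, hence n | k.  So some k-sum exceeds the
   mean, and by at least 1, which bounds msum and disc from below.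
   For the upper bound, read the positions row by row as an r x m array (r = 2q+1) and
   give column a the values a*r+1, ..., a*r+r, placed down the rows in an order x that is
   reversed in odd columns.  A k-window then consists of m vertical pairs, and its sum
   differs from m(n+1) by a combination of the excesses x(b) + x(b+1) - (r-1) of adjacent
   rows.  The zigzag order keeps every excess in {-1,0,1}, which suffices when m is odd
   (and n odd forces m odd); for even m, the order b |-> b/2 mod r makes consecutive
   excesses increase by at most 1. *)

From HB Require Import structures.
From mathcomp Require Import all_boot all_order all_algebra all_fingroup.
From mathcomp Require Import zify ring lra.
Set Implicit Arguments. Unset Strict Implicit. Unset Printing Implicit Defensive.
Import Order.TTheory GRing.Theory Num.Theory.

Lemma big_ord_shift_periodic (R : Type) (idx : R) (op : Monoid.com_law idx)
    (n t : nat) (g : nat -> R) :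
  (forall j, g (j + n) = g j) ->
  \big[op/idx]_(i < n) g (i + t) = \big[op/idx]_(i < n) g i.
Proof.
move=> gP; elim: t => [|t IH]; first by apply: eq_bigr => i _; rewrite addn0.
rewrite -IH; case: n gP {IH} => [|n] gP; first by rewrite !big_ord0.
rewrite big_ord_recr big_ord_recl /= Monoid.mulmC; congr (op _ _).
  by rewrite addnS -addSn addnC gP.
by apply: eq_bigr => i _; rewrite addnS addSn.
Qed.

Lemma double_sum_ord_succ n : (\sum_(i < n) i.+1).*2 = n * n.+1.
Proof.
elim: n => [|n IH]; first by rewrite big_ord0.
by rewrite big_ord_recr /= doubleD IH; lia.
Qed.

Section Windows.
Variables (n k : nat) (s : 'S_n).

Lemma pivalDr j : pival s (j + n) = pival s j.
Proof. by rewrite /pival modnDr. Qed.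

Lemma pival_mod j : pival s (j %% n) = pival s j.
Proof. by rewrite /pival modn_mod. Qed.

Lemma pival_ord (i : 'I_n) : pival s i = (s i).+1.
Proof. by rewrite /pival modn_small // valK. Qed.

Lemma ksum_mod i : ksum k s (i %% n) = ksum k s i.
Proof. by apply: eq_bigr => j _; rewrite -pival_mod modnDml pival_mod. Qed.

Lemma ksumS i : ksum k s i.+1 + pival s i = ksum k s i + pival s (i + k).
Proof.
rewrite addnC; have -> : pival s i + ksum k s i.+1 = \sum_(j < k.+1) pival s (i + j).
  rewrite big_ord_recl addn0; congr (_ + _).
  by apply: eq_bigr => j _; rewrite addnS.
by rewrite big_ord_recr.
Qed.

Lemma sum_ksum : \sum_(i < n) ksum k s i = k * \sum_(i < n) pival s i.
Proof.
rewrite exchange_big /= -[k in RHS]card_ord -sum_nat_const.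
by apply: eq_bigr => j _; rewrite big_ord_shift_periodic //; exact: pivalDr.
Qed.

Lemma sum_pival : (\sum_(i < n) pival s i).*2 = n * n.+1.
Proof.
rewrite (eq_bigr (fun i => (s i).+1)) => [|i _]; last exact: pival_ord.
rewrite (reindex_inj (@perm_inj _ s^-1)%g) /=.
rewrite (eq_bigr (fun i : 'I_n => (i : nat).+1)) => [|i _]; last by rewrite permKV.
exact: double_sum_ord_succ.
Qed.

Lemma ksum_const_dvdn : 0 < n -> (forall i, ksum k s i = ksum k s 0) -> n %| k.
Proof.
move=> n_gt0 ksum_const.
have : pival s k = pival s 0 by have := ksumS 0; rewrite !ksum_const add0n; lia.
have := pival_ord (Ordinal (ltn_pmod k n_gt0)); have := pival_ord (Ordinal n_gt0).
rewrite /= pival_mod => -> -> [/val_inj/perm_inj/(congr1 val) /= k_mod_n].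
by rewrite /dvdn k_mod_n.
Qed.

Lemma exists_ksum_gt_mean : 0 < k < n -> exists i : 'I_n, k * n.+1 < (ksum k s i).*2.
Proof.
case/andP=> k_gt0 lt_kn; apply/existsP; apply: contraT.
rewrite negb_exists => /forallP /= small_ksums.
have n_gt0 : 0 < n by apply: leq_ltn_trans lt_kn.
have le_ksum (i : 'I_n) : xpredT i ->
    (ksum k s i).*2 <= k * n.+1 ?= iff ((ksum k s i).*2 == k * n.+1).
  by move=> _; apply: leqif_eq; rewrite leqNgt small_ksums.
have [_] := leqif_sum le_ksum.
have -> : \sum_(i < n) (ksum k s i).*2 = \sum_(i < n) k * n.+1.
  rewrite -(big_morph double doubleD double0) sum_ksum doubleMr sum_pival.
  by rewrite sum_nat_const card_ord mulnCA.
rewrite eqxx => /esym /forallP all_eq.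
have ksum_const i : ksum k s i = ksum k s 0.
  have /eqP := all_eq (Ordinal (ltn_pmod i n_gt0)).
  have /eqP := all_eq (Ordinal (ltn_pmod 0 n_gt0)).
  by rewrite /= !ksum_mod => <- /double_inj.
by have := dvdn_leq k_gt0 (ksum_const_dvdn n_gt0 ksum_const); rewrite leqNgt lt_kn.
Qed.

End Windows.

Lemma dvdnS_modn d i : 0 < d -> (d %| i.+1) = ((i %% d).+1 == d).
Proof.
move=> d_gt0; rewrite /dvdn -addn1 -modnDml addn1.
have := ltn_pmod i d_gt0; rewrite leq_eqVlt => /orP[/eqP-> | lt_d].
  by rewrite modnn !eqxx.
by rewrite modn_small // (ltn_eqF lt_d).
Qed.

Section Grid.
Variables (m r : nat) (x : nat -> nat).

(* Position j is the cell (row j %/ m, column j %% m); values are 0-based here. *)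
Definition grid_offset (a b : nat) : nat :=
  if odd a then r.-1 - x (b %% r) else x (b %% r).

Definition grid (j : nat) : nat := j %% m * r + grid_offset (j %% m) (j %/ m).

Definition excess (b : nat) : int := ((x (b %% r) + x (b.+1 %% r))%:Z - r.-1%:Z)%R.

Definition window_dev (i : nat) : int :=
  (((odd m)%:Z - (odd (i %% m))%:Z) * excess (i %/ m)
   + (odd (i %% m))%:Z * excess (i %/ m).+1)%R.

Lemma window_dev_odd : odd m -> (forall b, `|excess b| <= 1)%R ->
  forall i, (`|window_dev i| <= 1)%R.
Proof.
move=> odd_m small_excess i; rewrite /window_dev odd_m ler_norml.
have := small_excess (i %/ m); have := small_excess (i %/ m).+1; rewrite !ler_norml.
by case: odd => /=; lia.
Qed.

Lemma window_dev_even : ~~ odd m -> (forall b, excess b.+1 - excess b <= 1)%R ->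
  forall i, (window_dev i <= 1)%R.
Proof.
move=> /negbTE even_m excess_step i; rewrite /window_dev even_m.
by have := excess_step (i %/ m); case: odd => /=; lia.
Qed.

Hypotheses (m_gt0 : 0 < m) (r_gt0 : 0 < r).
Hypothesis x_lt : forall b, b < r -> x b < r.
Hypothesis x_inj : forall b1 b2, b1 < r -> b2 < r -> x b1 = x b2 -> b1 = b2.

Lemma grid_offset_lt a b : grid_offset a b < r.
Proof. by have := x_lt (ltn_pmod b r_gt0); rewrite /grid_offset; case: odd; lia. Qed.

Lemma grid_rowcol b a : a < m -> grid (b * m + a) = a * r + grid_offset a b.
Proof.
by move=> lt_am; have := edivn_eq b lt_am; rewrite edivn_def /grid => -[-> ->].
Qed.

Lemma grid_lt j : grid j < m * r.
Proof.
rewrite (divn_eq j m) grid_rowcol ?ltn_pmod //.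
have := grid_offset_lt (j %% m) (j %/ m); have := ltn_pmod j m_gt0; nia.
Qed.

Lemma grid_mod j : grid (j %% (m * r)) = grid j.
Proof.
have mod_m : j %% (m * r) %% m = j %% m by rewrite (modn_dvdm _ (dvdn_mulr r (dvdnn m))).
have div_m : j %% (m * r) %/ m %% r = j %/ m %% r.
  by rewrite mulnC divn_modl ?dvdn_mull // mulnK // modn_mod.
by rewrite /grid /grid_offset mod_m div_m.
Qed.

Lemma grid_inj j1 j2 : j1 < m * r -> j2 < m * r -> grid j1 = grid j2 -> j1 = j2.
Proof.
have row_lt j : j < m * r -> j %/ m < r by rewrite ltn_divLR // mulnC.
move=> /row_lt lt_b1 /row_lt lt_b2.
rewrite /grid => eq_grid.
have := congr1 (edivn^~ r) eq_grid.
rewrite /= !edivn_eq ?grid_offset_lt // => -[eq_a eq_off].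
have eq_b : j1 %/ m = j2 %/ m.
  move: eq_off; rewrite /grid_offset eq_a (modn_small lt_b1) (modn_small lt_b2).
  have := x_lt lt_b1; have := x_lt lt_b2.
  by case: odd => lt_x2 lt_x1 eq_x; apply: x_inj => //; lia.
by rewrite (divn_eq j1 m) (divn_eq j2 m) eq_a eq_b.
Qed.

Lemma grid_ord_inj : injective (fun i : 'I_(m * r) => Ordinal (grid_lt i)).
Proof. by move=> i1 i2 [/(grid_inj (ltn_ord i1) (ltn_ord i2))/val_inj]. Qed.

Definition grid_perm : 'S_(m * r) := perm grid_ord_inj.

Lemma pival_grid_perm j : pival grid_perm j = (grid j).+1.
Proof.
have mr_gt0 : 0 < m * r by rewrite muln_gt0 m_gt0.
rewrite -pival_mod -grid_mod.
have -> : j %% (m * r) = Ordinal (ltn_pmod j mr_gt0) by [].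
by rewrite pival_ord permE.
Qed.

Lemma grid_pair j :
  (((grid j).+1 + (grid (j + m)).+1)%:Z =
   ((j %% m).*2 * r + r + 1)%:Z + (-1) ^+ odd (j %% m) * excess (j %/ m))%R.
Proof.
set a := j %% m; set b := j %/ m.
have -> : j + m = b.+1 * m + a by rewrite /a /b {1}(divn_eq j m) mulSn; lia.
rewrite grid_rowcol ?ltn_pmod // {1}/grid -/a -/b /grid_offset /excess.
have := x_lt (ltn_pmod b r_gt0); have := x_lt (ltn_pmod b.+1 r_gt0).
by case: odd; rewrite /= ?expr0 ?expr1; lia.
Qed.

Lemma grid_shift j :
  ((grid (j + m.*2))%:Z =
   (grid j)%:Z + (-1) ^+ odd (j %% m) * (excess (j %/ m).+1 - excess (j %/ m)))%R.
Proof.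
set a := j %% m; set b := j %/ m.
have -> : j + m.*2 = b.+2 * m + a by rewrite /a /b {1}(divn_eq j m) !mulSn; lia.
rewrite grid_rowcol ?ltn_pmod // {1}/grid -/a -/b /grid_offset /excess.
have := x_lt (ltn_pmod b r_gt0); have := x_lt (ltn_pmod b.+2 r_gt0).
by case: odd; rewrite /= ?expr0 ?expr1; lia.
Qed.

Lemma window_devS i :
  window_dev i.+1 =
  (window_dev i + (-1) ^+ odd (i %% m) * (excess (i %/ m).+1 - excess (i %/ m)))%R.
Proof.
have := edivnS i m_gt0; rewrite dvdnS_modn // edivn_def /window_dev.
case: eqP => [last_col | _] [-> ->].
  have -> : odd m = ~~ odd (i %% m) by rewrite -[in LHS]last_col.
  by case: (odd (i %% m)); rewrite /= ?expr0 ?expr1; lia.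
by rewrite /=; case: (odd (i %% m)); case: (odd m); rewrite /= ?expr0 ?expr1; lia.
Qed.

Lemma sum_grid_pairs L : L <= m ->
  ((\sum_(t < L) ((grid t).+1 + (grid (t + m)).+1))%N%:Z =
   (L * (L * r).+1)%:Z + (odd L)%:Z * excess 0)%R.
Proof.
elim: L => [|L IH] lt_Lm; first by rewrite big_ord0 mul0n /= mul0r addr0.
rewrite big_ord_recr /= PoszD IH ?(ltnW lt_Lm) // grid_pair.
rewrite (modn_small lt_Lm) (divn_small lt_Lm).
have -> : L.+1 * (L.+1 * r).+1 = L * (L * r).+1 + (L.*2 * r + r + 1).
  by rewrite -muln2; ring.
move: (L * _) (L.*2 * r + r + 1) (excess 0) => u v e.
by case: (odd L); rewrite /= ?expr0 ?expr1; lia.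
Qed.

Lemma ksum_grid_perm i :
  ((ksum m.*2 grid_perm i)%:Z = (m * (m * r).+1)%:Z + window_dev i)%R.
Proof.
elim: i => [|i IH].
  rewrite /window_dev mod0n div0n /= subr0 mul0r addr0 -sum_grid_pairs //.
  rewrite /ksum -addnn big_split_ord /=.
  congr Posz; rewrite -big_split; apply: eq_bigr => t _.
  by rewrite !add0n !pival_grid_perm [m + t]addnC.
have := ksumS m.*2 grid_perm i; rewrite !pival_grid_perm => /(congr1 Posz).
rewrite !PoszD window_devS.
by have := grid_shift i; move: ((-1) ^+ _ * _)%R => d; lia.
Qed.

End Grid.

Definition zigzag (r b : nat) : nat := if odd b then r.-1 - b else b.

Lemma zigzag_lt r b : b < r -> zigzag r b < r.
Proof. by rewrite /zigzag; case: odd; lia. Qed.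

Lemma zigzag_inj q b1 b2 : b1 < q.*2.+1 -> b2 < q.*2.+1 ->
  zigzag q.*2.+1 b1 = zigzag q.*2.+1 b2 -> b1 = b2.
Proof.
rewrite /zigzag -!muln2 /= => lt_b1 lt_b2.
have := odd_double_half b1; have := odd_double_half b2; rewrite -!muln2.
by case: (odd b1); case: (odd b2) => /=; lia.
Qed.

Lemma excess_zigzag q b : (`|excess q.*2.+1 (zigzag q.*2.+1) b| <= 1)%R.
Proof.
have := edivnS b (ltn0Sn q.*2); rewrite dvdnS_modn // edivn_def /excess /zigzag ler_norml.
case: eqP => [/succn_inj last_col | _] [_ ->] /=.
  by rewrite last_col odd_double; lia.
by have := ltn_pmod b (ltn0Sn q.*2); case: odd => /=; lia.
Qed.

Definition halve_mod (q b : nat) : nat := q.+1 * b %% q.*2.+1.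

Lemma halve_mod_lt q b : halve_mod q b < q.*2.+1.
Proof. exact: ltn_pmod. Qed.

Lemma halve_modK q b : (halve_mod q b).*2 = b %[mod q.*2.+1].
Proof.
rewrite -muln2 modnMml.
have -> : q.+1 * b * 2 = b * q.*2.+1 + b by rewrite -muln2; ring.
by rewrite modnMDl.
Qed.

Lemma halve_mod_inj q b1 b2 : b1 < q.*2.+1 -> b2 < q.*2.+1 ->
  halve_mod q b1 = halve_mod q b2 -> b1 = b2.
Proof.
move=> lt_b1 lt_b2 eq_half.
by rewrite -(modn_small lt_b1) -(modn_small lt_b2) -halve_modK eq_half halve_modK.
Qed.

Lemma excess_halve_modS q b :
  (excess q.*2.+1 (halve_mod q) b.+1 - excess q.*2.+1 (halve_mod q) b <= 1)%R.
Proof.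
rewrite /excess /halve_mod !modnMmr.
have -> : q.+1 * b.+2 = (q.+1 * b).+1 + q.*2.+1 by rewrite -!muln2; ring.
rewrite modnDr -[(q.+1 * b).+1]addn1 -modnDml.
by have := leq_mod ((q.+1 * b) %% q.*2.+1 + 1) q.*2.+1; lia.
Qed.

Lemma exists_perm_ksum_near_mean n m q : 0 < m -> odd m -> n = m * q.*2.+1 ->
  exists s : 'S_n, forall i,
    m * n.+1 <= (ksum m.*2 s i).+1 /\ ksum m.*2 s i <= (m * n.+1).+1.
Proof.
move=> m_gt0 odd_m ->.
have r_gt0 := ltn0Sn q.*2; have x_lt := @zigzag_lt q.*2.+1; have x_inj := @zigzag_inj q.
exists (grid_perm m_gt0 r_gt0 x_lt x_inj) => i.
have := window_dev_odd odd_m (excess_zigzag q) i; rewrite ler_norml.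
by have := ksum_grid_perm m_gt0 r_gt0 x_lt x_inj i; lia.
Qed.

Lemma exists_perm_ksum_le_succ_mean n m q : 0 < m -> n = m * q.*2.+1 ->
  exists s : 'S_n, forall i, ksum m.*2 s i <= (m * n.+1).+1.
Proof.
move=> m_gt0 def_n; have [odd_m | even_m] := boolP (odd m).
  have [s near_mean] := exists_perm_ksum_near_mean m_gt0 odd_m def_n.
  by exists s => i; case: (near_mean i).
move: def_n => ->.
have r_gt0 := ltn0Sn q.*2; have x_inj := @halve_mod_inj q.
have x_lt b : b < q.*2.+1 -> halve_mod q b < q.*2.+1 by move=> _; exact: halve_mod_lt.
exists (grid_perm m_gt0 r_gt0 x_lt x_inj) => i.
have := window_dev_even even_m (@excess_halve_modS q) i.
by have := ksum_grid_perm m_gt0 r_gt0 x_lt x_inj i; lia.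
Qed.

Lemma kmean_double n m : kmean n m.*2 = (m * n.+1)%:R%R.
Proof. by rewrite /kmean addn1 -muln2 mulnAC natrM mulfK. Qed.

Lemma msum_perm_ge1 n m (s : 'S_n) : 0 < m -> m.*2 < n -> (1 <= msum_perm m.*2 s)%R.
Proof.
move=> m_gt0 lt_kn; have [|i gt_mean] := exists_ksum_gt_mean s (k := m.*2).
  by rewrite double_gt0 m_gt0.
rewrite /msum_perm kmean_double lerBrDr nat1r; apply: (bigmax_sup i) => //.
by rewrite ler_nat; move: gt_mean; rewrite -!muln2; lia.
Qed.

Lemma msum_perm_le_disc_perm n k (s : 'S_n) : (msum_perm k s <= disc_perm k s)%R.
Proof.
rewrite /msum_perm lerBlDr; apply: bigmax_le => [|i _]; rewrite -lerBlDr.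
  exact: le_trans (ler_norm _) (bigmax_ge_id _ _ _ _).
exact: le_trans (ler_norm _) (le_bigmax _ _ i).
Qed.

Lemma msum_perm_le1 n m (s : 'S_n) :
  (forall i, ksum m.*2 s i <= (m * n.+1).+1) -> (msum_perm m.*2 s <= 1)%R.
Proof.
move=> small_ksum; rewrite /msum_perm kmean_double lerBlDr nat1r.
by apply: bigmax_le => [|i _]; rewrite ler_nat.
Qed.

Lemma disc_perm_le1 n m (s : 'S_n) :
  (forall i, m * n.+1 <= (ksum m.*2 s i).+1 /\ ksum m.*2 s i <= (m * n.+1).+1) ->
  (disc_perm m.*2 s <= 1)%R.
Proof.
move=> near_mean; rewrite /disc_perm kmean_double.
have near_mean_rat i : (`|(ksum m.*2 s i)%:R - (m * n.+1)%:R| <= 1 :> rat)%R.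
  have [] := near_mean i; rewrite -!(ler_nat rat) -!nat1r ler_norml => ? ?.
  by apply/andP; split; lra.
by apply: bigmax_le => [|i _]; apply: near_mean_rat.
Qed.

Lemma bigmin_eq_attained (T : finType) (R : realDomainType) (F : T -> R) (i0 j : T) c :
  (forall i, c <= F i)%R -> (F j <= c)%R -> \big[Num.min/F i0]_i F i = c.
Proof.
move=> lb le_Fj; apply/le_anti/andP; split; first exact: bigmin_inf le_Fj.
exact: le_bigmin.
Qed.

Theorem corollary1p5 (n k : nat) :
  (0 < k)%N -> ~~ odd k -> (k < n)%N -> n = k./2 %[mod k] ->
  msum n k = 1%R /\ (odd n -> disc n k = 1%R).
Proof.
move=> k_gt0 even_k lt_kn n_mod_k.
have [m def_k] : exists m, k = m.*2.
  by exists k./2; rewrite -[LHS]odd_double_half (negbTE even_k).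
subst k; rewrite doubleK in n_mod_k.
have m_gt0 : 0 < m by rewrite -double_gt0.
have def_n : n = m * (n %/ m.*2).*2.+1.
  rewrite {1}(divn_eq n m.*2) n_mod_k modn_small; last by rewrite -addnn; lia.
  by move: (n %/ _) => q; rewrite -!muln2 mulnS; ring.
have ge1 (s : 'S_n) : (1 <= msum_perm m.*2 s)%R by apply: msum_perm_ge1.
split.
  have [s small_ksum] := exists_perm_ksum_le_succ_mean m_gt0 def_n.
  exact: (bigmin_eq_attained (j := s) _ ge1 (msum_perm_le1 small_ksum)).
move=> odd_n; have odd_m : odd m by move: odd_n; rewrite def_n oddM => /andP[].
have [s near_mean] := exists_perm_ksum_near_mean m_gt0 odd_m def_n.
apply: (bigmin_eq_attained (j := s) _ _ (disc_perm_le1 near_mean)) => t.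
exact: le_trans (ge1 t) (msum_perm_le_disc_perm _ _).
Qed.
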